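(* Let $(\Omega,\mathcal F,\mu)$ be a $\sigma$-finite measure space, $\mathcal P_>$ the set of $\mu$-a.s. strictly positive probability densities, and for $p\in\mathcal P_>$ let $H_p=L^2_0(p)=\{u: E_p[u^2]<\infty,\ E_p[u]=0\}$ with inner product $(u,v)\mapsto E_p[uv]$. For $p,q\in\mathcal P_>$ and $u\in H_p$ define $$U_p^q u=\sqrt{\tfrac pq}\,u-\Bigl(1+E_q\Bigl[\sqrt{\tfrac pq}\Bigr]\Bigr)^{-1}\Bigl(1+\sqrt{\tfrac pq}\Bigr)E_q\Bigl[\sqrt{\tfrac pq}\,u\Bigr].$$ Then: (1) $U_p^q$ is an isometry of $H_p$ onto $H_q$; (2) $U_q^p\circ U_p^q u=u$ for all $u\in H_p$, and the adjoint of $U_p^q$ (with respect to the inner products of $H_p$ and $H_q$) is $U_q^p$.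
   Context: $E_p[\cdot]$ denotes expectation with respect to the probability measure $p\cdot\mu$. *)

From HB Require Import structures.
From mathcomp Require Import all_boot all_order all_algebra.
From mathcomp Require Import all_classical all_reals all_analysis.
Set Implicit Arguments. Unset Strict Implicit. Unset Printing Implicit Defensive.
Import Order.TTheory GRing.Theory Num.Theory.
Local Open Scope classical_set_scope.
Local Open Scope ring_scope.

Section Defs.
Context (d : measure_display) (T : measurableType d) (R : realType)
  (mu : {measure set T -> \bar R}).

Definition Ep (p f : T -> R) : \bar R := (\int[mu]_x (f x * p x)%:E)%E.

Definition pos_density (p : T -> R) : Prop :=
  [/\ measurable_fun setT p,
      (\int[mu]_x (p x)%:E = 1)%E &
      {ae mu, forall x, 0 < p x}].

Definition inH (p u : T -> R) : Prop :=
  [/\ measurable_fun setT u,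
      (Ep p (fun x => (u x ^+ 2)%R) < +oo)%E &
      Ep p u = 0%E].

Definition ip (p u v : T -> R) : \bar R := Ep p (fun x => u x * v x).

Definition sqr (p q : T -> R) : T -> R := fun x => Num.sqrt (p x / q x).

Definition Uop (p q u : T -> R) : T -> R := fun x =>
  sqr p q x * u x
  - (1 + fine (Ep q (sqr p q)))^-1 * (1 + sqr p q x)
    * fine (Ep q (fun y => sqr p q y * u y)).
End Defs.

From HB Require Import structures.
From mathcomp Require Import all_boot all_order all_algebra.
From mathcomp Require Import all_classical all_reals all_analysis.
From mathcomp Require Import measurable_realfun ring lra.
Import Order.TTheory GRing.Theory Num.Theory.
Local Open Scope classical_set_scope.
Local Open Scope ring_scope.

Set Implicit Arguments. Unset Strict Implicit. Unset Printing Implicit Defensive.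

(* Write g := sqrt(p q), A := E_q[sqrt(p/q)] = \int g, c := E_q[sqrt(p/q) u]
   = \int u g and k := (1 + A)^-1. Almost everywhere (U_p^q u) q equals
   u g - k c (q + g), so every quantity in the statement is a linear
   combination of \int p = \int q = 1, \int u p = \int v q = 0, \int g,
   \int u g, \int v g, \int u^2 p and \int u v g, and each claim reduces to an
   identity in k, c and A. The inversion identity even holds pointwise, since
   sqrt(q/p) sqrt(p/q) = 1 and E_p[sqrt(q/p) U_p^q u] = -c; applied with p and
   q exchanged it gives surjectivity. *)

Section real_facts.
Context (R : realType).

Lemma measurable_invr : measurable_fun [set: R] (@GRing.inv R).
Proof.
rewrite -(setvU [set 0%R]).
have m0 : measurable [set (0:R)] by [].
have [_ minv] := measurable_funU (@GRing.inv R) (measurableC m0) m0.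
apply: minv.
split; last exact: measurable_fun_set1.
apply: open_continuous_measurable_fun.
  apply: closed_openC; apply: accessible_closed_set1.
  exact/hausdorff_accessible/Rhausdorff.
by move=> x; rewrite inE /= => x0; apply: inv_continuous; exact/eqP.
Qed.

Lemma measurable_sqrtr : measurable_fun [set: R] (@Num.sqrt R).
Proof. by apply: continuous_measurable_fun; exact: sqrt_continuous. Qed.

Lemma le_normr_bounds (x y : R) : - y <= x -> x <= y -> `|x| <= `|y|.
Proof. by move=> yx xy; rewrite (le_trans _ (ler_norm y)) // ler_norml yx. Qed.

End real_facts.

Section real_integrable.
Context (d : measure_display) (T : measurableType d) (R : realType)
  (mu : {measure set T -> \bar R}).
Local Notation integrable f := (mu.-integrable setT (EFin \o f)).
Local Notation Rint f := (Rintegral mu setT f).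

Lemma integrableRD (f g : T -> R) :
  integrable f -> integrable g -> integrable (fun x => f x + g x).
Proof. by move=> fi gi; exact: eq_integrable (integrableD _ fi gi). Qed.

Lemma integrableRB (f g : T -> R) :
  integrable f -> integrable g -> integrable (fun x => f x - g x).
Proof. by move=> fi gi; exact: eq_integrable (integrableB _ fi gi). Qed.

Lemma integrableRZl (k : R) (f : T -> R) :
  integrable f -> integrable (fun x => k * f x).
Proof. by move=> fi; exact: eq_integrable (integrableZl _ k fi). Qed.

Lemma le_integrable_ae (f g : T -> R) : measurable_fun setT f ->
  {ae mu, forall x, `|f x| <= `|g x|} -> integrable g -> integrable f.
Proof.
move=> mf fg /integrableP[mg gfin]; apply/integrableP.
split; first exact/measurable_EFinP.
apply: le_lt_trans gfin; apply: ae_ge0_le_integral => //.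
- exact/measurableT_comp/measurable_EFinP.
- exact: measurableT_comp.
by apply: filterS fg => x fgx _ /=; rewrite lee_fin.
Qed.

Lemma ge0_integrable_ae (f : T -> R) : measurable_fun setT f ->
  {ae mu, forall x, 0 <= f x} -> (\int[mu]_x (f x)%:E < +oo)%E ->
  integrable f.
Proof.
move=> mf f0 ffin; apply/integrableP; split; first exact/measurable_EFinP.
rewrite (_ : \int[mu]_x _ = \int[mu]_x (f x)%:E)%E //.
apply: ae_eq_integral => //.
- exact/measurableT_comp/measurable_EFinP.
- exact/measurable_EFinP.
by apply: filterS f0 => x fx0 _ /=; rewrite ger0_norm.
Qed.

Lemma ae_eq_Rintegral (f g : T -> R) :
  measurable_fun setT f -> measurable_fun setT g ->
  {ae mu, forall x, f x = g x} -> Rint f = Rint g.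
Proof.
move=> mf mg fg; rewrite /Rintegral; congr fine.
apply: ae_eq_integral => //; [exact/measurable_EFinP..|].
by apply: filterS fg => x /= ->.
Qed.

Lemma Ep_Rintegral (q f : T -> R) : integrable (fun x => f x * q x) ->
  Ep mu q f = (Rint (fun x => f x * q x))%:E.
Proof. by move=> fi; rewrite /Rintegral fineK //; exact: integrable_fin_num. Qed.

Lemma Ep_ae_eq (q f h : T -> R) : measurable_fun setT (fun x => f x * q x) ->
  {ae mu, forall x, f x * q x = h x} -> integrable h ->
  Ep mu q f = (Rint h)%:E.
Proof.
move=> mf fh hi; have fi : integrable (fun x => f x * q x).
  by apply: le_integrable_ae mf _ hi; apply: filterS fh => x ->.
rewrite (Ep_Rintegral fi); congr EFin.
by apply: ae_eq_Rintegral mf _ fh; case/integrableP: hi => /measurable_EFinP.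
Qed.

Section density.
Variables (r : T -> R) (hr : pos_density mu r).

Lemma pos_density_measurable : measurable_fun setT r.
Proof. by case: hr. Qed.

Lemma pos_density_integrable : integrable r.
Proof.
case: hr => mr r1 r0; apply: ge0_integrable_ae => //; last by rewrite r1 ltry.
by apply: filterS r0 => x /ltW.
Qed.

Lemma Rintegral_pos_density : Rint r = 1.
Proof. by case: hr => _ r1 _; rewrite /Rintegral r1. Qed.

Section centered.
Variables (u : T -> R) (hu : inH mu r u).

Lemma inH_measurable : measurable_fun setT u.
Proof. by case: hu. Qed.

Lemma inH_integrable_sqr : integrable (fun x => u x ^+ 2 * r x).
Proof.
case: hu => mu' u2 _; case: hr => mr _ r0; apply: ge0_integrable_ae => //.
- exact/measurable_funM/mr/measurable_funX.
- by apply: filterS r0 => x r0; rewrite mulr_ge0 ?sqr_ge0 // ltW.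
Qed.

(* |u| r <= (u^2 + 1) r *)
Lemma inH_integrable : integrable (fun x => u x * r x).
Proof.
apply: le_integrable_ae
  (integrableRD inH_integrable_sqr pos_density_integrable).
  exact/measurable_funM/pos_density_measurable/inH_measurable.
case: hr => _ _; apply: filterS => x /ltW r0.
have := mulr_ge0 r0 (sqr_ge0 (u x - 1)); have := mulr_ge0 r0 (sqr_ge0 (u x + 1)).
by move=> h1 h2; apply: le_normr_bounds; nra.
Qed.

Lemma Rintegral_inH : Rint (fun x => u x * r x) = 0.
Proof. by case: hu => _ _; rewrite (Ep_Rintegral inH_integrable) => -[]. Qed.

End centered.
End density.
End real_integrable.

Section transport.
Context (d : measure_display) (T : measurableType d) (R : realType)
  (mu : {measure set T -> \bar R}).
Local Notation integrable f := (mu.-integrable setT (EFin \o f)).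
Local Notation Rint f := (Rintegral mu setT f).

Definition gmean (p q : T -> R) (x : T) : R := Num.sqrt (p x) * Num.sqrt (q x).

Definition Ucoef (p q : T -> R) : R := (1 + fine (Ep mu q (sqr p q)))^-1.

Definition Uinner (p q u : T -> R) : R :=
  fine (Ep mu q (fun y => sqr p q y * u y)).

Lemma UopE p q u x :
  Uop mu p q u x = sqr p q x * u x - Ucoef p q * (1 + sqr p q x) * Uinner p q u.
Proof. by []. Qed.

Lemma gmeanC p q : gmean q p = gmean p q.
Proof. by apply/funext => x; rewrite /gmean mulrC. Qed.

Lemma gmean_ge0 p q x : 0 <= gmean p q x.
Proof. by rewrite mulr_ge0 ?sqrtr_ge0. Qed.

Lemma measurable_sqrt_fun (f : T -> R) : measurable_fun setT f ->
  measurable_fun setT (fun x => Num.sqrt (f x)).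
Proof. exact: measurableT_comp (@measurable_sqrtr R). Qed.

Lemma measurable_sqr (p q : T -> R) : measurable_fun setT p ->
  measurable_fun setT q -> measurable_fun setT (sqr p q).
Proof.
move=> mp mq; apply/measurable_sqrt_fun/measurable_funM => //.
exact: measurableT_comp (@measurable_invr R) mq.
Qed.

Lemma measurable_gmean (p q : T -> R) : measurable_fun setT p ->
  measurable_fun setT q -> measurable_fun setT (gmean p q).
Proof. by move=> mp mq; apply: measurable_funM; exact: measurable_sqrt_fun. Qed.

Lemma measurable_Uop (p q u : T -> R) : measurable_fun setT p ->
  measurable_fun setT q -> measurable_fun setT u ->
  measurable_fun setT (Uop mu p q u).
Proof.
move=> mp mq mu'; have msqr := measurable_sqr mp mq.
apply: measurable_funB; first exact: measurable_funM.
apply: measurable_funM => //; apply: measurable_funM => //.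
exact: measurable_funD.
Qed.

(* Naming the square roots of p x and q x turns every pointwise identity into
   a rational identity in two positive reals, which [field] can decide. *)
Lemma sqrt_param (p q : T -> R) x : 0 < p x -> 0 < q x -> exists a b,
  [/\ 0 < a, 0 < b, p x = a ^+ 2, q x = b ^+ 2 &
   [/\ sqr p q x = a / b, sqr q p x = b / a & gmean p q x = a * b]].
Proof.
move=> px qx; exists (Num.sqrt (p x)), (Num.sqrt (q x)).
split; rewrite ?sqrtr_gt0 ?sqr_sqrtr ?ltW //.
by split; rewrite // /sqr sqrtrM ?sqrtrV ?ltW // invr_ge0 ltW.
Qed.

Section densities.
Variables (p q : T -> R) (hp : pos_density mu p) (hq : pos_density mu q).
Let mp := pos_density_measurable hp.
Let mq := pos_density_measurable hq.

Lemma ae_pos_densities : {ae mu, forall x, 0 < p x /\ 0 < q x}.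
Proof. by case: hp => _ _ p0; case: hq => _ _ q0; exact: filterS2 p0 q0. Qed.

Lemma integrable_gmean : integrable (gmean p q).
Proof.
apply: le_integrable_ae (measurable_gmean mp mq) _
  (integrableRD (pos_density_integrable hp) (pos_density_integrable hq)).
apply: filterS ae_pos_densities => x [px qx].
have [a [b [a0 b0 -> -> [_ _ ->]]]] := sqrt_param px qx.
by apply: le_normr_bounds; nra.
Qed.

Lemma Ep_sqr : fine (Ep mu q (sqr p q)) = Rint (gmean p q).
Proof.
apply: ae_eq_Rintegral.
- exact: measurable_funM (measurable_sqr mp mq) mq.
- exact: measurable_gmean.
apply: filterS ae_pos_densities => x [px qx].
have [a [b [_ b0 _ -> [-> _ ->]]]] := sqrt_param px qx.
by field; rewrite gt_eqF.
Qed.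

Lemma Ucoef_gmean : Ucoef p q = (1 + Rint (gmean p q))^-1.
Proof. by rewrite /Ucoef Ep_sqr. Qed.

Lemma add1_Rintegral_gmean_neq0 : 1 + Rint (gmean p q) != 0.
Proof.
rewrite gt_eqF // ltr_wpDr //.
by apply: Rintegral_ge0 => // x _; exact: gmean_ge0.
Qed.

Section centered.
Variables (u : T -> R) (hu : inH mu p u).
Let mu' := inH_measurable hu.

Lemma integrable_mul_gmean : integrable (fun x => u x * gmean p q x).
Proof.
apply: le_integrable_ae _ _
  (integrableRD (inH_integrable_sqr hp hu) (pos_density_integrable hq)).
  exact: measurable_funM (measurable_gmean mp mq).
apply: filterS ae_pos_densities => x [px qx].
have [a [b [a0 b0 -> -> [_ _ ->]]]] := sqrt_param px qx.
have := sqr_ge0 (u x * a - b); have := sqr_ge0 (u x * a + b).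
by move=> h1 h2; apply: le_normr_bounds; nra.
Qed.

Lemma Uinner_gmean : Uinner p q u = Rint (fun x => u x * gmean p q x).
Proof.
apply: ae_eq_Rintegral; last first.
- apply: filterS ae_pos_densities => x [px qx].
  have [a [b [_ b0 _ -> [-> _ ->]]]] := sqrt_param px qx.
  by field; rewrite gt_eqF.
- by apply: measurable_funM => //; exact: measurable_gmean.
- apply: measurable_funM => //; apply: measurable_funM => //.
  exact: measurable_sqr.
Qed.

Lemma integrable_mul2_gmean v : inH mu q v ->
  integrable (fun x => u x * v x * gmean p q x).
Proof.
move=> hv; apply: le_integrable_ae _ _
  (integrableRD (inH_integrable_sqr hp hu) (inH_integrable_sqr hq hv)).
  apply: measurable_funM (measurable_gmean mp mq).
  exact: measurable_funM (inH_measurable hv).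
apply: filterS ae_pos_densities => x [px qx].
have [a [b [a0 b0 -> -> [_ _ ->]]]] := sqrt_param px qx.
have := sqr_ge0 (u x * a - v x * b); have := sqr_ge0 (u x * a + v x * b).
by move=> h1 h2; apply: le_normr_bounds; nra.
Qed.

End centered.
End densities.

Section isometry.
Variables (p q : T -> R) (hp : pos_density mu p) (hq : pos_density mu q).
Let mp := pos_density_measurable hp.
Let mq := pos_density_measurable hq.

Ltac integrable_lin := repeat first
  [ assumption | apply: integrableRB | apply: integrableRD
  | apply: integrableRZl ].

Lemma Ucoef_sym : Ucoef q p = Ucoef p q.
Proof. by rewrite (Ucoef_gmean hp hq) (Ucoef_gmean hq hp) gmeanC. Qed.

Section transport_of_u.
Variables (u : T -> R) (hu : inH mu p u).
Let mu' := inH_measurable hu.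
Let k := Ucoef p q.
Let c := Uinner p q u.
Let p_int := pos_density_integrable hp.
Let q_int := pos_density_integrable hq.
Let g_int := integrable_gmean hp hq.
Let ug_int := integrable_mul_gmean hp hq hu.

Lemma Ep_Uop : Ep mu q (Uop mu p q u) = 0%E.
Proof.
rewrite (Ep_ae_eq
  (h := fun x => u x * gmean p q x - k * c * (q x + gmean p q x))).
- rewrite RintegralB ?RintegralZl ?RintegralD //; try by integrable_lin.
  rewrite /k /c (Ucoef_gmean hp hq) (Uinner_gmean hp hq hu).
  rewrite (Rintegral_pos_density hq).
  by congr EFin; field; exact: add1_Rintegral_gmean_neq0.
- by apply: measurable_funM => //; exact: measurable_Uop.
- apply: filterS (ae_pos_densities hp hq) => x [px qx].
  rewrite UopE /k /c.
  have [a [b [_ b0 _ -> [-> _ ->]]]] := sqrt_param px qx.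
  by field; rewrite gt_eqF.
- by integrable_lin.
Qed.

Lemma Ep_Uop_sqr : Ep mu q (fun x => Uop mu p q u x ^+ 2) =
  (Rint (fun x => u x ^+ 2 * p x))%:E.
Proof.
have iu2 := inH_integrable_sqr hp hu.
have iup := inH_integrable hp hu.
rewrite (Ep_ae_eq (h := fun x => u x ^+ 2 * p x
    - (2 * k * c) * (u x * gmean p q x + u x * p x)
    + (k * c) ^+ 2 * (q x + (2 * gmean p q x + p x)))).
- rewrite RintegralD ?RintegralB ?RintegralZl ?RintegralD ?RintegralZl //;
    try by integrable_lin.
  rewrite /k /c (Ucoef_gmean hp hq) (Uinner_gmean hp hq hu).
  rewrite (Rintegral_pos_density hq) (Rintegral_pos_density hp).
  rewrite (Rintegral_inH hp hu).
  by congr EFin; field; exact: add1_Rintegral_gmean_neq0.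
- apply: measurable_funM => //; apply: measurable_funX.
  exact: measurable_Uop.
- apply: filterS (ae_pos_densities hp hq) => x [px qx].
  rewrite UopE /k /c.
  have [a [b [_ b0 -> -> [-> _ ->]]]] := sqrt_param px qx.
  by field; rewrite gt_eqF.
- by integrable_lin.
Qed.

Lemma inH_Uop : inH mu q (Uop mu p q u).
Proof.
split; [exact: measurable_Uop | | exact: Ep_Uop].
by rewrite Ep_Uop_sqr ltry.
Qed.

Lemma ip_Uop : ip mu q (Uop mu p q u) (Uop mu p q u) = ip mu p u u.
Proof.
have sqrE (f : T -> R) : (fun x => f x * f x) = (fun x => f x ^+ 2).
  by apply/funext => x; rewrite expr2.
rewrite /ip !sqrE Ep_Uop_sqr.
by rewrite (Ep_Rintegral (inH_integrable_sqr hp hu)).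
Qed.

Lemma Uinner_Uop : Uinner q p (Uop mu p q u) = - c.
Proof.
have iup := inH_integrable hp hu.
rewrite {1}/Uinner
  (Ep_ae_eq (h := fun x => u x * p x - k * c * (gmean p q x + p x))) /=.
- rewrite RintegralB ?RintegralZl ?RintegralD //; try by integrable_lin.
  rewrite /k /c (Ucoef_gmean hp hq) (Uinner_gmean hp hq hu).
  rewrite (Rintegral_pos_density hp) (Rintegral_inH hp hu).
  by field; exact: add1_Rintegral_gmean_neq0.
- apply: measurable_funM => //; apply: measurable_funM.
    exact: measurable_sqr.
  exact: measurable_Uop.
- apply: filterS (ae_pos_densities hp hq) => x [px qx].
  rewrite UopE /k /c.
  have [a [b [a0 b0 -> _ [-> -> ->]]]] := sqrt_param px qx.
  by field; rewrite !gt_eqF.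
- by integrable_lin.
Qed.

Lemma UopK : {ae mu, forall x, Uop mu q p (Uop mu p q u) x = u x}.
Proof.
apply: filterS (ae_pos_densities hp hq) => x [px qx].
rewrite UopE Uinner_Uop Ucoef_sym UopE.
have [a [b [a0 b0 _ _ [-> -> _]]]] := sqrt_param px qx.
by rewrite /k /c; field; rewrite !gt_eqF.
Qed.

Lemma ip_Uop_adj v : inH mu q v ->
  ip mu q (Uop mu p q u) v = ip mu p u (Uop mu q p v).
Proof.
move=> hv; have mv := inH_measurable hv.
have iuvg := integrable_mul2_gmean hp hq hu hv.
have ivg : integrable (fun x => v x * gmean p q x).
  by rewrite -gmeanC; exact: integrable_mul_gmean.
have ivq := inH_integrable hq hv.
have iup := inH_integrable hp hu.
rewrite /ip (Ep_ae_eq (h := fun x => u x * v x * gmean p q x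
    - k * c * (v x * q x + v x * gmean p q x))); first last.
- by integrable_lin.
- apply: filterS (ae_pos_densities hp hq) => x [px qx].
  rewrite UopE /k /c.
  have [a [b [_ b0 _ -> [-> _ ->]]]] := sqrt_param px qx.
  by field; rewrite gt_eqF.
- apply: measurable_funM => //; apply: measurable_funM => //.
  exact: measurable_Uop.
rewrite (Ep_ae_eq (h := fun x => u x * v x * gmean p q x
    - Ucoef q p * Uinner q p v * (u x * p x + u x * gmean p q x))); first last.
- by integrable_lin.
- apply: filterS (ae_pos_densities hp hq) => x [px qx].
  rewrite UopE /k /c.
  have [a [b [a0 _ -> _ [_ -> ->]]]] := sqrt_param px qx.
  by field; rewrite gt_eqF.
- apply: measurable_funM => //; apply: measurable_funM => //.
  exact: measurable_Uop.
rewrite !RintegralB ?RintegralZl ?RintegralD //; try by integrable_lin.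
rewrite (Rintegral_inH hp hu) (Rintegral_inH hq hv) Ucoef_sym.
rewrite /k /c (Uinner_gmean hp hq hu) (Uinner_gmean hq hp hv) (gmeanC p q).
by congr EFin; ring.
Qed.

End transport_of_u.
End isometry.
End transport.

Theorem proposition13 (d : measure_display) (T : measurableType d)
  (R : realType) (mu : {measure set T -> \bar R})
  (smu : sigma_finite setT mu) (p q : T -> R)
  (hp : pos_density mu p) (hq : pos_density mu q) :
  (* (1) U_p^q maps H_p into H_q, isometrically, and onto H_q *)
  ((forall u, inH mu p u -> inH mu q (Uop mu p q u)) /\
   (forall u, inH mu p u ->
      ip mu q (Uop mu p q u) (Uop mu p q u) = ip mu p u u) /\
   (forall w, inH mu q w ->
      exists2 u, inH mu p u & {ae mu, forall x, Uop mu p q u x = w x})) /\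
  (* (2) U_q^p is a left inverse of U_p^q and its adjoint *)
  ((forall u, inH mu p u ->
      {ae mu, forall x, Uop mu q p (Uop mu p q u) x = u x}) /\
   (forall u v, inH mu p u -> inH mu q v ->
      ip mu q (Uop mu p q u) v = ip mu p u (Uop mu q p v))).
Proof.
split; [split; [|split] | split].
- by move=> u; exact: inH_Uop.
- by move=> u; exact: ip_Uop.
- move=> w hw; exists (Uop mu q p w); first exact: inH_Uop.
  exact: UopK.
- by move=> u; exact: UopK.
- by move=> u v hu; exact: ip_Uop_adj.
Qed.
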